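(* Let $G=(V,E)$ be a finite simple undirected graph, $G_0:=G$, and let $W_1,\dots,W_r$ be distinct subsets of $V$ such that for every $t\in\{1,\dots,r\}$, $W_t$ is a clique of $G_{t-1}$ with $|W_t|\ge2$ and $G_t:=G_{t-1}\mid W_t$. Let $F_0:=STAB(G)$ and $F_t:=\{x\in STAB(G)\mid x_{W_j}=1,\ j=1,\dots,t\}$. Then for every $t\in\{1,\dots,r\}$, the inequality $x_{W_t}\le1$ is valid for $F_{t-1}$.
   Context: For a graph $G=(V,E)$, $\mathcal S(G)\subseteq\{0,1\}^V$ is the set of characteristic vectors of stable sets of $G$, and $STAB(G)=\mathrm{conv}\,\mathcal S(G)$. For $W\subseteq V$ and $x\in\mathbb R^V$, $x_W=\sum_{v\in W}x_v$. The clique projection of a clique $W$ ($|W|\ge2$) of a graph $H=(V,E_H)$ is $H\mid W=(V,E_H\cup\{uv\notin E_H\mid u\ne v,\ W\subseteq N_H(u)\cup N_H(v)\})$, where $N_H(u)$ is the neighborhood of $u$ in $H$. *)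

From mathcomp Require Import all_boot all_order all_algebra.
Set Implicit Arguments. Unset Strict Implicit. Unset Printing Implicit Defensive.
Import Order.TTheory GRing.Theory Num.Theory.
Local Open Scope ring_scope.

Definition simple_graph (V : finType) (e : rel V) : Prop :=
  symmetric e /\ irreflexive e.

Definition nbhd (V : finType) (e : rel V) (u : V) : {set V} := [set w | e u w].

Definition is_clique (V : finType) (e : rel V) (W : {set V}) : bool :=
  [forall u in W, forall v in W, (u != v) ==> e u v].

Definition is_stable (V : finType) (e : rel V) (S : {set V}) : bool :=
  [forall u in S, forall v in S, ~~ e u v].

Definition clique_proj (V : finType) (e : rel V) (W : {set V}) : rel V :=
  fun u v => e u v || ((u != v) && (W \subset nbhd e u :|: nbhd e v)).

(* G_i := (...((G | W_1) | W_2) ... | W_i), Ws = [:: W_1; ...; W_r]. *)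
Definition proj_seq (V : finType) (e : rel V) (Ws : seq {set V}) (i : nat) : rel V :=
  foldl (@clique_proj V) e (take i Ws).

Definition chi (R : ringType) (V : finType) (S : {set V}) : V -> R :=
  fun v => (v \in S)%:R.

Definition xsum (R : ringType) (V : finType) (x : V -> R) (W : {set V}) : R :=
  \sum_(v in W) x v.

Definition STAB (R : realFieldType) (V : finType) (e : rel V) (x : V -> R) : Prop :=
  exists lam : {set V} -> R,
    [/\ forall S, 0 <= lam S,
        forall S, ~~ is_stable e S -> lam S = 0,
        \sum_(S : {set V}) lam S = 1 &
        forall v, x v = \sum_(S : {set V}) lam S * chi R S v].

(* A point x of STAB(G) is a convex combination of stable sets S of G.  If
   every S in its support is stable in G_{t-1}, then S meets the clique W_t of
   G_{t-1} at most once, so x_{W_t} <= 1.  Support sets stay stable along the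
   projections: when x_{W_j} = 1, every support set meets W_j exactly once, in
   a vertex w, and two vertices of S cannot both be non-adjacent to w, so no
   edge of G_{j-1} | W_j joins two vertices of S. *)

From mathcomp Require Import all_boot all_order all_algebra.
Import Order.TTheory GRing.Theory Num.Theory.
Local Open Scope ring_scope.

Lemma stable_clique_meet_le1 {V : finType} {e : rel V} {W S : {set V}} :
  is_clique e W -> is_stable e S -> (#|S :&: W| <= 1)%N.
Proof.
move=> /forallP clW /forallP stS; apply/card_le1_eqP => u v.
rewrite !inE => /andP[uS uW] /andP[vS vW]; apply/eqP/negPn/negP => neq_vu.
move: (clW u) => /implyP /(_ uW) /forallP /(_ v) /implyP /(_ vW).
rewrite eq_sym neq_vu /= => euv.
by move: (stS u) => /implyP /(_ uS) /forallP /(_ v) /implyP /(_ vS); rewrite euv.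
Qed.

Lemma stable_clique_proj {V : finType} {e : rel V} {W S : {set V}} :
  is_stable e S -> #|S :&: W| = 1%N -> is_stable (clique_proj e W) S.
Proof.
move=> stS /eqP /cards1P [w SW_w].
have : w \in S :&: W by rewrite SW_w set11.
rewrite inE => /andP[wS wW].
have no_edge a b : a \in S -> b \in S -> e a b = false.
  move=> aS bS; move/forallP: stS => /(_ a) /implyP /(_ aS) /forallP /(_ b).
  by move/implyP/(_ bS)/negbTE.
apply/forallP => u; apply/implyP => uS; apply/forallP => v; apply/implyP => vS.
rewrite /clique_proj no_edge //= negb_and; apply/orP; right.
by apply/negP => /subsetP /(_ w wW); rewrite !inE !no_edge.
Qed.

Section ConvexCombination.

Context {R : realFieldType} {V : finType} {lam : {set V} -> R}.
Hypothesis lam_ge0 : forall S, 0 <= lam S.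
Hypothesis lam_sum1 : \sum_(S : {set V}) lam S = 1.

Lemma xsum_convex {x : V -> R} (W : {set V}) :
  (forall v, x v = \sum_(S : {set V}) lam S * chi R S v) ->
  xsum x W = \sum_(S : {set V}) lam S * (#|S :&: W|)%:R.
Proof.
move=> x_def; rewrite /xsum; under eq_bigr do rewrite x_def.
rewrite exchange_big /=; apply: eq_bigr => S _.
rewrite -mulr_sumr /chi -natr_sum -sum1_card; congr (_ * _%:R).
rewrite big_mkcond [RHS]big_mkcond /=.
by apply: eq_bigr => v _; rewrite !inE; case: (v \in S); case: (v \in W).
Qed.

Context {W : {set V}}.
Hypothesis support_meet_le1 : forall S, lam S != 0 -> (#|S :&: W| <= 1)%N.

Lemma convex_meet_le1 : \sum_(S : {set V}) lam S * (#|S :&: W|)%:R <= 1.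
Proof.
rewrite -[X in _ <= X]lam_sum1; apply: ler_sum => S _.
have [->|lamS] := eqVneq (lam S) 0; first by rewrite !mul0r.
by rewrite ler_piMr // lern1 support_meet_le1.
Qed.

Lemma convex_meet_eq1 :
  \sum_(S : {set V}) lam S * (#|S :&: W|)%:R = 1 ->
  forall S, lam S != 0 -> #|S :&: W| = 1%N.
Proof.
move=> sum1 S lamS.
have slack0 : \sum_(T : {set V}) lam T * (1 - (#|T :&: W|)%:R) = 0.
  under eq_bigr do rewrite mulrBr mulr1.
  by rewrite sumrB lam_sum1 sum1 subrr.
have slack_ge0 T : true -> 0 <= lam T * (1 - (#|T :&: W|)%:R).
  have [->|lamT] := eqVneq (lam T) 0; first by rewrite mul0r.
  by rewrite mulr_ge0 // subr_ge0 lern1 support_meet_le1.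
move/eqP: (psumr_eq0P slack_ge0 slack0 (i := S) isT).
by rewrite mulf_eq0 (negbTE lamS) subr_eq0 eq_sym pnatr_eq1 => /eqP.
Qed.

End ConvexCombination.

Lemma support_stable_proj_seq {R : realFieldType} {V : finType} {e : rel V}
    {Ws : seq {set V}} {i : nat} {x : V -> R} {lam : {set V} -> R} :
  (forall j, (j < i)%N -> is_clique (proj_seq e Ws j) (nth set0 Ws j)) ->
  (i <= size Ws)%N ->
  (forall S, 0 <= lam S) ->
  (forall S, ~~ is_stable e S -> lam S = 0) ->
  \sum_(S : {set V}) lam S = 1 ->
  (forall v, x v = \sum_(S : {set V}) lam S * chi R S v) ->
  (forall j, (j < i)%N -> xsum x (nth set0 Ws j) = 1) ->
  forall S, lam S != 0 -> is_stable (proj_seq e Ws i) S.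
Proof.
move=> cliques le_i_size lam_ge0 lam_stable lam_sum1 x_def tight.
elim: i le_i_size cliques tight => [|j IH] lt_j_size cliques tight S lamS.
  by rewrite /proj_seq take0 /=; apply: contraNT lamS => /lam_stable ->.
rewrite /proj_seq (take_nth set0 lt_j_size) foldl_rcons -/(proj_seq e Ws j).
have stable_j T : lam T != 0 -> is_stable (proj_seq e Ws j) T.
  by apply: IH => [|k ltk|k ltk]; [exact: ltnW | exact: cliques (ltnW ltk) |
    exact: tight (ltnW ltk)].
apply: stable_clique_proj; first exact: stable_j.
have meet_le1 T : lam T != 0 -> (#|T :&: nth set0 Ws j| <= 1)%N.
  by move=> lamT; exact: stable_clique_meet_le1 (cliques j (ltnSn j)) (stable_j T lamT).
apply: (convex_meet_eq1 lam_ge0 lam_sum1 meet_le1 _ S lamS).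
by rewrite -(xsum_convex _ x_def); apply: tight.
Qed.

(* Ws = [:: W_1; ...; W_r]; W_{i+1} = nth set0 Ws i; G_i = proj_seq e Ws i. *)
Theorem corollary1 (R : realFieldType) (V : finType) (e : rel V)
    (Ws : seq {set V}) :
  simple_graph e ->
  uniq Ws ->
  (forall i, (i < size Ws)%N ->
     is_clique (proj_seq e Ws i) (nth set0 Ws i) /\ (2 <= #|nth set0 Ws i|)%N) ->
  forall i, (i < size Ws)%N ->
  forall x : V -> R,
    STAB e x ->
    (forall j, (j < i)%N -> xsum x (nth set0 Ws j) = 1) ->
    xsum x (nth set0 Ws i) <= 1.
Proof.
move=> _ _ cliques i lt_i_size x [lam [lam_ge0 lam_stable lam_sum1 x_def]] tight.
have clique_i j : (j <= i)%N -> is_clique (proj_seq e Ws j) (nth set0 Ws j).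
  by move=> le_ji; exact: (cliques j (leq_ltn_trans le_ji lt_i_size)).1.
have stable_i := support_stable_proj_seq (fun j lt_ji => clique_i j (ltnW lt_ji))
  (ltnW lt_i_size) lam_ge0 lam_stable lam_sum1 x_def tight.
rewrite (xsum_convex _ x_def); apply: convex_meet_le1 => // S lamS.
exact: stable_clique_meet_le1 (clique_i i (leqnn i)) (stable_i S lamS).
Qed.
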